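(* The substring complexity $\delta$ satisfies the following upper bounds on its sensitivity: substitutions: $\mathsf{MS}_{\mathrm{sub}}(\delta,n) \leq 2$ and $\mathsf{AS}_{\mathrm{sub}}(\delta,n) \leq 1$; insertions: $\mathsf{MS}_{\mathrm{ins}}(\delta,n) \leq 2$ and $\mathsf{AS}_{\mathrm{ins}}(\delta,n) \leq 1$; deletions: $\limsup_{n\to\infty}\mathsf{MS}_{\mathrm{del}}(\delta,n) \leq 1.5$ and $\limsup_{n\to\infty}\mathsf{AS}_{\mathrm{del}}(\delta,n) \leq 1$.
   Context: Strings are finite sequences over an alphabet $\Sigma$; $\Sigma^n$ is the set of strings of length $n$. $\mathsf{ed}(T,S)$ is the edit distance (minimum number of single-character substitutions, insertions, deletions turning $T$ into $S$). For a measure $C$ assigning a number $C(T)$ to each string, define $\mathsf{MS}_{\mathrm{sub}}(C,n)=\max_{T\in\Sigma^n}\{C(T')/C(T): T'\in\Sigma^n,\ \mathsf{ed}(T,T')=1\}$, $\mathsf{MS}_{\mathrm{ins}}(C,n)$ and $\mathsf{MS}_{\mathrm{del}}(C,n)$ the same with $T'\in\Sigma^{n+1}$, resp. $T'\in\Sigma^{n-1}$; and $\mathsf{AS}_{\mathrm{sub}},\mathsf{AS}_{\mathrm{ins}},\mathsf{AS}_{\mathrm{del}}$ the same with $C(T')-C(T)$ in place of $C(T')/C(T)$. For a string $T$ of length $n$, $\mathsf{Substr}(T,k)$ is the number of distinct substrings of length $k$ of $T$, and the substring complexity is $\delta(T)=\max_{1\le k\le n}\mathsf{Substr}(T,k)/k$.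 *)

From HB Require Import structures.
From mathcomp Require Import all_boot all_order all_algebra.
From mathcomp Require Import all_classical all_reals ereal sequences.
Set Implicit Arguments. Unset Strict Implicit. Unset Printing Implicit Defensive.
Import Order.TTheory GRing.Theory Num.Theory.

Section StringDefs.
Variable Sigma : eqType.

Fixpoint ed (s t : seq Sigma) {struct s} : nat :=
  match s with
  | [::] => size t
  | a :: s' =>
    let fix aux (t : seq Sigma) : nat :=
      match t with
      | [::] => size s
      | b :: t' => minn (minn (ed s' t' + (a != b)) (ed s' t).+1) (aux t').+1
      end in aux t
  end.

Definition Substr (T : seq Sigma) (k : nat) : nat :=
  size (undup [seq take k (drop i T) | i <- iota 0 (size T - k).+1]).

Variable R : realType.
Local Open Scope ring_scope.

Definition delta (T : seq Sigma) : R :=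
  \big[Num.max/0]_(1 <= k < (size T).+1) ((Substr T k)%:R / k%:R).

Local Open Scope ereal_scope.
Local Open Scope classical_set_scope.

Definition MS (C : seq Sigma -> R) (n m : nat) : \bar R :=
  ereal_sup [set x | exists T T' : seq Sigma,
     [/\ size T = n, size T' = m, ed T T' = 1%N & x = (C T' / C T)%:E]].
Definition AS (C : seq Sigma -> R) (n m : nat) : \bar R :=
  ereal_sup [set x | exists T T' : seq Sigma,
     [/\ size T = n, size T' = m, ed T T' = 1%N & x = (C T' - C T)%:E]].

Definition MS_sub C n := MS C n n.
Definition MS_ins C n := MS C n n.+1.
Definition MS_del C n := MS C n n.-1.
Definition AS_sub C n := AS C n n.
Definition AS_ins C n := AS C n n.+1.
Definition AS_del C n := AS C n n.-1.
End StringDefs.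

(* Write the two strings as T = u x v and T' = u y v with |x|, |y| <= 1.  A
   length-k window of T' that misses y is a window of T, and at most k start
   positions give windows meeting y; hence Substr T' k <= Substr T k + k and
   delta T' <= delta T + 1.  As delta T >= 1 for nonempty T, the ratio is at
   most 2.  After a deletion, either T is unary, and then so is T', so that
   delta T' <= 1 <= delta T; or T has two distinct letters, delta T >= 2, and
   (delta T + 1) / delta T <= 3/2.  All bounds hold for every n, so in
   particular for the limsup. *)
From mathcomp Require Import all_boot all_order all_algebra.
From mathcomp Require Import all_classical all_reals ereal sequences.
From mathcomp Require Import zify lra.
Import Order.TTheory GRing.Theory Num.Theory.

Set Implicit Arguments.
Unset Strict Implicit.
Unset Printing Implicit Defensive.

Lemma size_undup_subset_cat {T : eqType} (s1 s2 s3 : seq T) :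
  {subset s1 <= s2 ++ s3} -> size (undup s1) <= size (undup s2) + size s3.
Proof.
move=> sub; rewrite -size_cat; apply: uniq_leq_size; first exact: undup_uniq.
by move=> w; rewrite mem_undup => /sub; rewrite !mem_cat mem_undup.
Qed.

Lemma drop_cat_addn {T : Type} (s t : seq T) m :
  drop (size s + m) (s ++ t) = drop m t.
Proof. by rewrite addnC -drop_drop drop_size_cat. Qed.

Section EditDistance.
Variable Sigma : eqType.
Implicit Types (a b : Sigma) (s t u v x y : seq Sigma).

Lemma ed_cons a s b t : ed (a :: s) (b :: t) =
  minn (minn (ed s t + (a != b)) (ed s (b :: t)).+1) (ed (a :: s) t).+1.
Proof. by []. Qed.

Lemma ed_eq0 s t : ed s t = 0 -> s = t.
Proof.
elim: s t => [|a s IH] [|b t] //; rewrite ed_cons => h.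
have /eqP ab : a == b by move: h; case: (a == b) => //=; lia.
by rewrite ab (IH t) //; move: h; lia.
Qed.

Lemma ed_le1_decomp s t : ed s t <= 1 -> exists u x y v,
  [/\ s = u ++ x ++ v, t = u ++ y ++ v, size x <= 1 & size y <= 1].
Proof.
elim: s t => [|a s IH] [|b t].
- by exists [::], [::], [::], [::].
- by exists [::], [::], (b :: t), [::]; rewrite /= cats0.
- by case: s {IH} => [_|//]; exists [::], [:: a], [::], [::].
rewrite ed_cons => h.
have [subst_le1|subst_gt1] := leqP (ed s t + (a != b)) 1.
  case: eqVneq subst_le1 => [<- subst_le1|ab subst_le1].
    have /IH [u [x [y [v [-> -> hx hy]]]]] : ed s t <= 1.
      by move: subst_le1; lia.
    by exists (a :: u), x, y, v.
  have /ed_eq0 -> : ed s t = 0 by move: subst_le1; lia.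
  by exists [::], [:: a], [:: b], t.
have [/ed_eq0 ->|] := eqVneq (ed s (b :: t)) 0.
  by exists [::], [:: a], [::], (b :: t).
have [/ed_eq0 <-|] := eqVneq (ed (a :: s) t) 0.
  by exists [::], [::], [:: b], (a :: s).
by move: h subst_gt1; lia.
Qed.

Lemma ed_le1_subset s t : ed s t <= 1 -> size t < size s -> {subset t <= s}.
Proof.
case/ed_le1_decomp=> u [x [y [v [-> -> hx _]]]].
rewrite !size_cat => hlt.
have -> : y = [::] by apply: size0nil; lia.
by move=> c; rewrite cat0s !mem_cat => /orP[->|->]; rewrite ?orbT.
Qed.

End EditDistance.

Section Substrings.
Variable Sigma : eqType.
Implicit Types (a b : Sigma) (s u v x y : seq Sigma).

Definition windows s k := [seq take k (drop i s) | i <- iota 0 (size s - k).+1].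

Lemma SubstrE s k : Substr s k = size (undup (windows s k)).
Proof. by []. Qed.

Lemma Substr_le s k : Substr s k <= (size s - k).+1.
Proof.
by rewrite SubstrE; apply: leq_trans (size_undup _) _; rewrite size_map size_iota.
Qed.

Lemma Substr_gt0 s k : 0 < Substr s k.
Proof.
rewrite SubstrE lt0n size_eq0; apply/eqP => /undup_nil.
by rewrite /windows /=.
Qed.

Lemma mem_windows1 a s : a \in s -> [:: a] \in windows s 1.
Proof.
move=> sa; apply/mapP; exists (index a s).
  by move: sa; rewrite -index_mem mem_iota; lia.
by rewrite (drop_nth a) ?index_mem // nth_index //= take0.
Qed.

Lemma Substr1_ge2 a b s : a \in s -> b \in s -> a != b -> 1 < Substr s 1.
Proof.
move=> sa sb ab; rewrite SubstrE.
have -> : 2 = size [:: [:: a]; [:: b]] by [].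
apply: uniq_leq_size; first by rewrite /= inE andbT; apply: contra ab => /eqP [->].
by move=> w; rewrite !inE mem_undup => /orP[] /eqP ->; apply: mem_windows1.
Qed.

Lemma Substr_const a s k : all (pred1 a) s -> Substr s k <= 1.
Proof.
move=> s_const; rewrite SubstrE.
suff : {subset undup (windows s k) <= [:: nseq (minn k (size s)) a]}.
  by move/(uniq_leq_size (undup_uniq _)).
move=> w; rewrite mem_undup => /mapP [i]; rewrite mem_iota => /andP[_ hi] ->.
have /all_pred1P -> : all (pred1 a) (take k (drop i s)).
  by apply/allP => c /mem_take /mem_drop; apply/allP: c.
rewrite inE size_take size_drop.
by case: ifP => cmp; apply/eqP; congr nseq; move: cmp; lia.
Qed.

Lemma Substr_edit u x y v k : size y <= 1 -> 0 < k ->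
  Substr (u ++ y ++ v) k <= Substr (u ++ x ++ v) k + k.
Proof.
move=> hy k_gt0; set T := u ++ x ++ v; set T' := u ++ y ++ v.
have sT : size T = size u + size x + size v by rewrite /T !size_cat addnA.
have sT' : size T' = size u + size y + size v by rewrite /T' !size_cat addnA.
have [kT'|k_gtT'] := leqP k (size T'); last first.
  by apply: leq_trans (Substr_le _ _) _; lia.
rewrite SubstrE.
apply: leq_trans (@size_undup_subset_cat _ _ (windows T k)
  [seq take k (drop i T') | i <- iota ((size u).+1 - k) k] _) _; last first.
  by rewrite size_map size_iota.
move=> w /mapP [i]; rewrite mem_iota => /andP[_ hi] ->; rewrite mem_cat.
have [left_of_y|ends_after_u] := leqP (i + k) (size u).
  apply/orP; left; apply/mapP; exists i; first by rewrite mem_iota; lia.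
  by rewrite /T /T' !take_drop !takel_cat //; lia.
have [right_of_y|starts_before_v] := leqP (size u + size y) i.
  have -> : drop i T' = drop (i - size u - size y) v.
    rewrite /T' catA -(drop_cat_addn (u ++ y) v (i - size u - size y)).
    by rewrite size_cat; congr drop; lia.
  apply/orP; left; apply/mapP; exists (size (u ++ x) + (i - size u - size y)).
    by rewrite mem_iota size_cat; lia.
  by rewrite /T catA drop_cat_addn.
apply/orP; right; apply/mapP; exists i => //; rewrite mem_iota; lia.
Qed.

End Substrings.

Local Open Scope ring_scope.

Section SubstringComplexity.
Variables (Sigma : eqType) (R : realType).
Implicit Types (a b : Sigma) (s t u v x y : seq Sigma).

Local Notation delta := (@delta Sigma R).

Lemma delta_ge0 s : 0 <= delta s.
Proof. by rewrite /delta; elim/big_ind: _ => // p q p0 q0; rewrite le_max p0. Qed.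

Lemma Substr_le_delta s k :
  (0 < k <= size s)%N -> (Substr s k)%:R / k%:R <= delta s.
Proof.
move=> k_range; apply: (le_bigmax_seq _ k) => //.
by rewrite mem_index_iota ltnS.
Qed.

Lemma delta_le s c : 0 <= c ->
  (forall k, (0 < k <= size s)%N -> (Substr s k)%:R / k%:R <= c) -> delta s <= c.
Proof.
move=> c0 Substr_le_c; rewrite /delta big_seq_cond; apply: bigmax_le => // k.
by rewrite mem_index_iota ltnS andbT; apply: Substr_le_c.
Qed.

Lemma delta_nil : delta [::] = 0.
Proof. by rewrite /delta big_geq. Qed.

Lemma delta_ge1 s : s != [::] -> 1 <= delta s.
Proof.
case: s => // a s _; apply: le_trans _ (@Substr_le_delta (a :: s) 1 isT).
by rewrite divr1 ler1n Substr_gt0.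
Qed.

Lemma delta_ge2 a b s : a \in s -> b \in s -> a != b -> 2 <= delta s.
Proof.
move=> sa sb ab; have s_nonnil : (0 < 1 <= size s)%N by case: s sa {sb}.
apply: le_trans _ (Substr_le_delta s_nonnil).
by rewrite divr1 ler_nat (Substr1_ge2 sa sb ab).
Qed.

Lemma delta_const a s : all (pred1 a) s -> delta s <= 1.
Proof.
move=> s_const; apply: delta_le => // k /andP[k_gt0 _].
rewrite ler_pdivrMr ?ltr0n // mul1r ler_nat.
exact: leq_trans (Substr_const k s_const) _.
Qed.

Lemma delta_edit u x y v : (size y <= 1)%N ->
  delta (u ++ y ++ v) <= delta (u ++ x ++ v) + 1.
Proof.
set T := u ++ x ++ v; set T' := u ++ y ++ v => hy.
apply: delta_le => [|k /andP[k_gt0 kT']]; first by rewrite addr_ge0 ?delta_ge0.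
have k_pos : (0 : R) < k%:R by rewrite ltr0n.
have [kT|k_gtT] := leqP k (size T).
  apply: le_trans (_ : (Substr T k + k)%:R / k%:R <= _).
    by rewrite ler_pM2r ?invr_gt0 // ler_nat Substr_edit.
  by rewrite natrD mulrDl divff ?gt_eqF // lerD2r Substr_le_delta ?k_gt0.
have Substr_T'_le1 : (Substr T' k <= 1)%N.
  apply: leq_trans (Substr_le _ _) _.
  by move: k_gtT kT' hy; rewrite /T /T' !size_cat; lia.
apply: le_trans (_ : 1 <= _); last by rewrite lerDr delta_ge0.
by rewrite ler_pdivrMr // mul1r ler_nat (leq_trans Substr_T'_le1).
Qed.

Lemma delta_ed_le1 s t : (ed s t <= 1)%N -> delta t <= delta s + 1.
Proof. by case/ed_le1_decomp=> u [x [y [v [-> -> _ hy]]]]; exact: delta_edit. Qed.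

Lemma delta_ratio_ed_le1 s t : (ed s t <= 1)%N -> delta t / delta s <= 2.
Proof.
move=> st; have [->|s_nonnil] := eqVneq s [::].
  by rewrite delta_nil invr0 mulr0.
have := delta_ed_le1 st; have := delta_ge1 s_nonnil.
by move=> ds dt; rewrite ler_pdivrMr; lra.
Qed.

Lemma delta_ratio_ed_le1_subset s t : (ed s t <= 1)%N -> {subset t <= s} ->
  delta t / delta s <= 3 / 2.
Proof.
case: s => [|a s] st ts; first by rewrite delta_nil invr0 mulr0; lra.
have ds := @delta_ge1 (a :: s) isT; have dt := delta_ed_le1 st.
have [s_const|/allPn [b sb ba]] := boolP (all (pred1 a) (a :: s)).
  have t_const : all (pred1 a) t by apply/allP => c /ts /(allP s_const).
  by have := delta_const t_const; rewrite ler_pdivrMr; lra.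
have ab : a != b by rewrite eq_sym.
by have := delta_ge2 (mem_head a s) sb ab; rewrite ler_pdivrMr; lra.
Qed.

Lemma delta_ratio_delete s t : size t = (size s).-1 -> (ed s t <= 1)%N ->
  delta t / delta s <= 3 / 2.
Proof.
case: s => [|a s] size_t st; first by rewrite delta_nil invr0 mulr0; lra.
by apply: delta_ratio_ed_le1_subset st (ed_le1_subset st _); rewrite size_t.
Qed.

End SubstringComplexity.

Local Open Scope ereal_scope.

Section Sensitivity.
Variables (Sigma : eqType) (R : realType) (C : seq Sigma -> R).

Lemma MS_le n m (c : R) :
  (forall s t, size s = n -> size t = m -> ed s t = 1%N -> (C t / C s <= c)%R) ->
  MS C n m <= c%:E.
Proof. by move=> h; apply: ge_ereal_sup => _ [s [t [? ? ? ->]]]; rewrite lee_fin h. Qed.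

Lemma AS_le n m (c : R) :
  (forall s t, size s = n -> size t = m -> ed s t = 1%N -> (C t - C s <= c)%R) ->
  AS C n m <= c%:E.
Proof. by move=> h; apply: ge_ereal_sup => _ [s [t [? ? ? ->]]]; rewrite lee_fin h. Qed.

End Sensitivity.

Lemma limn_esup_le (R : realType) (u : (\bar R)^nat) (c : \bar R) :
  (forall n, u n <= c) -> limn_esup u <= c.
Proof.
move=> u_le_c; apply: (@le_trans _ _ (ereal_sup (range u))).
  by apply: ereal_inf_lbound; exists setT => //; exact: filterT.
by apply: ge_ereal_sup => _ [k _ <-].
Qed.

Local Open Scope ring_scope.
Local Open Scope ereal_scope.

Theorem mainTheorem2 (R : realType) (Sigma : eqType) :
  ((forall n : nat, MS_sub (@delta Sigma R) n <= 2%:E) /\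
  (forall n : nat, AS_sub (@delta Sigma R) n <= 1%:E)) /\
  ((forall n : nat, (0 < n)%N -> MS_ins (@delta Sigma R) n <= 2%:E) /\
   (forall n : nat, AS_ins (@delta Sigma R) n <= 1%:E)) /\
  (limn_esup (fun n => MS_del (@delta Sigma R) n) <= (3 / 2)%:E /\
   limn_esup (fun n => AS_del (@delta Sigma R) n) <= 1%:E).
Proof.
have AS_le1 n m : AS (@delta Sigma R) n m <= 1%:E.
  apply: AS_le => s t _ _ /eq_leq st.
  by have := delta_ed_le1 R st; rewrite lerBlDr addrC.
have MS_le2 n m : MS (@delta Sigma R) n m <= 2%:E.
  by apply: MS_le => s t _ _ /eq_leq; exact: delta_ratio_ed_le1.
have MS_del_le n : MS_del (@delta Sigma R) n <= (3 / 2)%:E.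
  apply: MS_le => s t <- size_t /eq_leq; exact: delta_ratio_delete.
split; [split|split; [split|split]].
- by move=> n; exact: MS_le2.
- by move=> n; exact: AS_le1.
- by move=> n _; exact: MS_le2.
- by move=> n; exact: AS_le1.
- exact: limn_esup_le.
- by apply: limn_esup_le => n; exact: AS_le1.
Qed.
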